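(* Let $k_1,\dots,k_i$ be positive integers with $k_1+\dots+k_i=2k$ and let $c=(i_1,j_1),\dots,(i_k,j_k)$ be an oriented chord diagram on $\{1,\dots,2k\}$. Then, as elements of the graph space $\mathcal{G}$ (where $(\Gamma,-\omega)=-(\Gamma,\omega)$): (i) if $\tau=(i_r\ j_r)\in S_{2k}$ for some $1\le r\le k$, then $\Gamma_{k_1,\dots,k_i}(\tau\cdot c)=-\Gamma_{k_1,\dots,k_i}(c)$; (ii) if $\sigma=(\sigma_1,\dots,\sigma_i)\in S_{k_1}\times\dots\times S_{k_i}\subset S_{2k}$ (each $\sigma_r$ permuting the $r$-th consecutive block of $\{1,\dots,2k\}$ of size $k_r$), then $\Gamma_{k_1,\dots,k_i}(\sigma\cdot c)=\Gamma_{k_1,\dots,k_i}(c)$; (iii) if $\sigma\in S_i$, then $\Gamma_{k_{\sigma(1)},\dots,k_{\sigma(i)}}\big((\sigma_{(k_1,\dots,k_i)})^{-1}\cdot c\big)=\operatorname{sgn}(\sigma)\,\Gamma_{k_1,\dots,k_i}(c)$.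
   Context: $S_{2k}$ acts on oriented chord diagrams by $\sigma\cdot((i_1,j_1),\dots,(i_k,j_k))=((\sigma(i_1),\sigma(j_1)),\dots,(\sigma(i_k),\sigma(j_k)))$. For $\sigma\in S_i$, let $B_1,\dots,B_i$ be the consecutive blocks of $\{1,\dots,2k\}$ of sizes $k_1,\dots,k_i$ and $B'_1,\dots,B'_i$ the consecutive blocks of sizes $k_{\sigma(1)},\dots,k_{\sigma(i)}$; $\sigma_{(k_1,\dots,k_i)}\in S_{2k}$ maps the $a$-th element of $B'_t$ to the $a$-th element of $B_{\sigma(t)}$ (the block permutation $V^{\otimes k_1}\otimes\cdots\otimes V^{\otimes k_i}\to V^{\otimes k_{\sigma(1)}}\otimes\cdots\otimes V^{\otimes k_{\sigma(i)}}$). Oriented graph $\Gamma_{k_1,\dots,k_i}(c)$: half-edges $h_1,\dots,h_{2k}$; vertices $\{h_1,\dots,h_{k_1}\},\{h_{k_1+1},\dots,h_{k_1+k_2}\},\dots,\{h_{k_1+\dots+k_{i-1}+1},\dots,h_{2k}\}$; edges $(h_{i_1},h_{j_1}),\dots,(h_{i_k},h_{j_k})$; orientation given by the vertex ordering as listed and the edge orientations as listed. Graphs, orientations and the space $\mathcal{G}$: a graph is a finite set of half-edges with a partition into vertices and a partition into two-element edges; an orientation is a class of (vertex ordering, ordering within each edge) modulo simultaneous changes of total sign $+1$ (sign of the vertex permutation times $(-1)$ per flipped edge); $\mathcal{G}$ is spanned by isomorphism classes of oriented graphs modulo $(\Gamma,-\omega)=-(\Gamma,\omega)$. *)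

From mathcomp Require Import all_boot all_order all_algebra fingroup perm.
Set Implicit Arguments. Unset Strict Implicit. Unset Printing Implicit Defensive.
Import GRing.Theory.
Local Open Scope ring_scope.

(* Half-edges are 'I_nh.  Vertices are 0,...,nv-1 (their order being the     *)
(* vertex ordering of the orientation); vtx h is the vertex of half-edge h.  *)
(* The edges are the orbits {h, inv h} of the fixed-point-free involution    *)
(* inv; the edge {h, inv h} is oriented as (h, inv h) iff h \in src.         *)
Record ograph := OGraph {
  nh  : nat;
  nv  : nat;
  vtx : 'I_nh -> nat;
  inv : 'I_nh -> 'I_nh;
  src : {set 'I_nh} }.
Arguments vtx : clear implicits.
Arguments inv : clear implicits.
Arguments src : clear implicits.

Definition ograph_wf (X : ograph) : Prop :=
  [/\ (forall h, (vtx X h < nv X)%N),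
      (forall a, (a < nv X)%N -> exists h, vtx X h = a),
      (forall h, inv X (inv X h) = h /\ inv X h != h) &
      (forall h, (h \in src X) != (inv X h \in src X))].

Definition giso (X Y : ograph) (phi : 'I_(nh X) -> 'I_(nh Y)) (pi : nat -> nat)
  : Prop :=
  [/\ bijective phi, nv X = nv Y,
      ({in [pred a | (a < nv X)%N] &, injective pi} /\
       (forall a, (a < nv X)%N -> (pi a < nv Y)%N)),
      (forall h, vtx Y (phi h) = pi (vtx X h)) &
      (forall h, inv Y (phi h) = phi (inv X h))].

Arguments giso : clear implicits.

(* number of inversions of pi on {0..m-1}: parity = sign of the permutation *)
Definition ninv (pi : nat -> nat) (m : nat) : nat :=
  (\sum_(a < m) \sum_(b < m) ((a < b) && (pi b < pi a))%N)%N.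

(* parity of the orientation change: sign(pi) * (-1)^(#flipped edges) *)
Definition gsign_exp (X Y : ograph) (phi : 'I_(nh X) -> 'I_(nh Y))
  (pi : nat -> nat) : nat :=
  (ninv pi (nv X) + #|[set h in src X | phi h \notin src Y]|)%N.

Arguments gsign_exp : clear implicits.

(* Linear functionals on the graph space G (over Q) are exactly the functions *)
(* on oriented graphs that are invariant under isomorphism and change sign    *)
(* under reversal of the orientation.                                         *)
Definition Gfunctional (f : ograph -> rat) : Prop :=
  forall X Y (phi : 'I_(nh X) -> 'I_(nh Y)) (pi : nat -> nat), ograph_wf X -> ograph_wf Y -> giso X Y phi pi ->
    f Y = (-1) ^+ gsign_exp X Y phi pi * f X.

(* Equality  X = e * Y  in the graph space G. *)
Definition Geq (X : ograph) (e : rat) (Y : ograph) : Prop :=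
  forall f, Gfunctional f -> f X = e * f Y.

(* An oriented chord diagram on {0..n-1} (0-indexed) : a list of ordered pairs *)
Definition chord_diagram (n k : nat) (c : seq ('I_n * 'I_n)) : Prop :=
  size c = k /\ uniq (flatten [seq [:: p.1; p.2] | p <- c]) /\ n = (2 * k)%N.

Definition cd_act n (s : 'S_n) (c : seq ('I_n * 'I_n)) : seq ('I_n * 'I_n) :=
  [seq (s p.1, s p.2) | p <- c].

Definition partner n (c : seq ('I_n * 'I_n)) (h : 'I_n) : 'I_n :=
  let p := nth (h, h) c (find (fun p => (p.1 == h) || (p.2 == h)) c) in
  if p.1 == h then p.2 else p.1.

Definition cd_src n (c : seq ('I_n * 'I_n)) : {set 'I_n} :=
  [set x | x \in [seq p.1 | p <- c]].

(* index (from 0) of the consecutive block of sizes ks containing h *)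
Definition blk (ks : seq nat) (h : nat) : nat :=
  count (fun r => sumn (take r.+1 ks) <= h)%N (iota 0 (size ks)).

Definition Gamma n (ks : seq nat) (c : seq ('I_n * 'I_n)) : ograph :=
  @OGraph n (size ks) (fun h => blk ks h) (partner c) (cd_src c).

From mathcomp Require Import all_boot all_order all_algebra fingroup perm.
From mathcomp Require Import zify.
Set Implicit Arguments. Unset Strict Implicit. Unset Printing Implicit Defensive.
Import GRing.Theory.

(* Each operation produces a graph isomorphic to Gamma_{k_1,...,k_i}(c), and
   the sign is the change of orientation: the sign of the vertex permutation
   times -1 per reversed edge.  In (i) the half-edges stay put and only the
   edge {i_r, j_r} is reversed.  In (ii) and (iii) the half-edges are relabelled
   by the permutation acting on c, which carries each edge together with its
   orientation; the vertices are then fixed in (ii) and permuted by sigma^-1 in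
   (iii), whose sign is the parity of its number of inversions. *)

Definition chord_ends n (c : seq ('I_n * 'I_n)) : seq 'I_n :=
  flatten [seq [:: p.1; p.2] | p <- c].

Definition incident n (x : 'I_n) (q : 'I_n * 'I_n) : bool := (q.1 == x) || (q.2 == x).

Lemma mem_chord_ends n (c : seq ('I_n * 'I_n)) x : (x \in chord_ends c) = has (incident x) c.
Proof.
elim: c => //= q c' IH.
by rewrite mem_cat !inE IH /incident (eq_sym q.1) (eq_sym q.2) -orbA.
Qed.

Lemma size_chord_ends n (c : seq ('I_n * 'I_n)) : size (chord_ends c) = (2 * size c)%N.
Proof. by elim: c => //= q c' IH; rewrite IH; lia. Qed.

Section ChordDiagram.
Variables (n : nat) (c : seq ('I_n * 'I_n)).
Hypothesis c_uniq : uniq (chord_ends c).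

Lemma chord_ends_neq q : q \in c -> q.1 != q.2.
Proof.
elim: c c_uniq => //= a c' IH /and3P [a1 _ uc'].
rewrite inE => /orP [/eqP-> | qc]; last exact: IH.
by apply: contraNneq a1 => ->; rewrite inE eqxx.
Qed.

Lemma chord_eq_incident x q q' :
  q \in c -> q' \in c -> incident x q -> incident x q' -> q = q'.
Proof.
elim: c c_uniq => //= a c' IH /and3P [a1 a2 uc'].
have notin y : incident y a -> y \notin chord_ends c'.
  case/orP => /eqP <- //.
  by apply: contra a1; rewrite inE => ->; rewrite orbT.
rewrite !inE => /orP [/eqP-> | qc] /orP [/eqP-> | q'c] hq hq' //; last exact: IH.
- by move: (notin x hq); rewrite mem_chord_ends => /hasP; case; exists q'.
- by move: (notin x hq'); rewrite mem_chord_ends => /hasP; case; exists q.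
Qed.

Lemma partner_chord q : q \in c -> partner c q.1 = q.2 /\ partner c q.2 = q.1.
Proof.
move=> qc.
have chord_of x : incident x q -> nth (x, x) c (find (incident x) c) = q.
  move=> qx; have hasx : has (incident x) c by apply/hasP; exists q.
  apply: (@chord_eq_incident x) => //; last exact: nth_find.
  by rewrite mem_nth // -has_find.
rewrite /partner !chord_of /incident ?eqxx ?orbT //.
by rewrite (negbTE (chord_ends_neq qc)).
Qed.

Lemma cd_src_chord q : q \in c -> (q.1 \in cd_src c) && (q.2 \notin cd_src c).
Proof.
move=> qc; rewrite !inE map_f //=; apply/mapP => -[q' q'c q2E].
have qq' : q = q' by apply: (@chord_eq_incident q.2); rewrite // /incident q2E eqxx ?orbT.
by move: (chord_ends_neq qc); rewrite q2E qq' eqxx.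
Qed.

Hypothesis c_full : size (chord_ends c) = n.

Lemma chord_at h : exists2 q, q \in c & incident h q.
Proof.
have : h \in chord_ends c.
  have /subset_cardP : #|chord_ends c| = #|'I_n| by rewrite card_ord (card_uniqP c_uniq).
  by move=> /(_ (subset_predT _)) ->.
by rewrite mem_chord_ends => /hasP.
Qed.

Lemma partnerK : involutive (partner c).
Proof.
move=> h; have [q qc /orP[] /eqP <-] := chord_at h;
by have [e1 e2] := partner_chord qc; rewrite ?e1 ?e2.
Qed.

Lemma partner_neq h : partner c h != h.
Proof.
have [q qc /orP[] /eqP <-] := chord_at h; have [e1 e2] := partner_chord qc;
by rewrite ?e1 ?e2 ?(chord_ends_neq qc) // eq_sym chord_ends_neq.
Qed.

Lemma cd_src_partner h : (partner c h \in cd_src c) = (h \notin cd_src c).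
Proof.
have [q qc /orP[] /eqP <-] := chord_at h; have [e1 e2] := partner_chord qc;
by rewrite ?e1 ?e2; case/andP: (cd_src_chord qc) => /[swap] /negbTE -> ->.
Qed.
End ChordDiagram.

Section Relabelling.
Variables (n : nat) (c : seq ('I_n * 'I_n)) (g : 'S_n).

Lemma chord_ends_act : chord_ends (cd_act g c) = map g (chord_ends c).
Proof. by elim: c => //= q c' IH; rewrite -IH. Qed.

Lemma uniq_chord_ends_act : uniq (chord_ends (cd_act g c)) = uniq (chord_ends c).
Proof. by rewrite chord_ends_act (map_inj_uniq (@perm_inj _ g)). Qed.

Lemma size_chord_ends_act : size (chord_ends (cd_act g c)) = size (chord_ends c).
Proof. by rewrite chord_ends_act size_map. Qed.

Lemma cd_src_act h : (g h \in cd_src (cd_act g c)) = (h \in cd_src c).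
Proof. by rewrite !inE /cd_act -map_comp (map_comp g fst) mem_map //; apply: perm_inj. Qed.

Hypotheses (c_uniq : uniq (chord_ends c)) (c_full : size (chord_ends c) = n).

Lemma partner_act h : partner (cd_act g c) (g h) = g (partner c h).
Proof.
have [q qc hq] := chord_at c_uniq c_full h; have [e1 e2] := partner_chord c_uniq qc.
have gqc : (g q.1, g q.2) \in cd_act g c by apply: (map_f (fun p => (g p.1, g p.2))).
have [f1 f2] := partner_chord (etrans uniq_chord_ends_act c_uniq) gqc.
by case/orP: hq => /eqP <-; rewrite ?e1 ?e2 ?f1 ?f2.
Qed.
End Relabelling.

Section ChordFlip.
Variables (n : nat) (c : seq ('I_n * 'I_n)) (p : 'I_n * 'I_n).
Hypotheses (c_uniq : uniq (chord_ends c)) (c_full : size (chord_ends c) = n).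
Hypothesis pc : p \in c.

Let t := tperm p.1 p.2.

(* partner c is an involution, so t fixes the partner of every point it fixes. *)
Lemma partner_tperm_chord : partner (cd_act t c) =1 partner c.
Proof.
have [e1 e2] := partner_chord c_uniq pc.
move=> h; rewrite -{1}(tpermK p.1 p.2 h) partner_act //.
case: tpermP => [->|->|/eqP h1 /eqP h2]; rewrite ?e1 ?e2 ?tpermL ?tpermR //.
have hK := partnerK c_uniq c_full h.
by apply: tpermD; [apply: contraNneq h2 | apply: contraNneq h1] => E; rewrite -hK -E ?e1 ?e2.
Qed.

Lemma cd_src_tperm_chord :
  [set h in cd_src c | h \notin cd_src (cd_act t c)] = [set p.1].
Proof.
apply/setP => h; rewrite in_set1 in_set -[h in h \notin _](tpermK p.1 p.2) cd_src_act.
have /andP [p1 p2] := cd_src_chord c_uniq pc.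
case: tpermP => [->|->|/eqP h1 _]; rewrite ?eqxx ?p1 ?(negbTE p2) ?andbN ?(negbTE h1) //.
by rewrite eq_sym (negbTE (chord_ends_neq c_uniq pc)).
Qed.
End ChordFlip.

Section Blocks.
Variable ks : seq nat.

Lemma sumn_take_leq i j : i <= j -> sumn (take i ks) <= sumn (take j ks).
Proof. by move=> ij; rewrite -(subnKC ij) takeD sumn_cat leq_addr. Qed.

Lemma sumn_take_nth t : t < size ks ->
  sumn (take t.+1 ks) = sumn (take t ks) + nth 0 ks t.
Proof. by move=> tks; rewrite (take_nth 0 tks) sumn_rcons. Qed.

Lemma count_ltn_iota t m : t <= m -> count (fun r => r < t) (iota 0 m) = t.
Proof.
move=> tm; rewrite -(subnKC tm) iotaD count_cat add0n.
rewrite (eq_in_count (a2 := predT)) => [|r]; last by rewrite mem_iota.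
rewrite count_predT size_iota (eq_in_count (a2 := pred0)) ?count_pred0 ?addn0 //.
by move=> r; rewrite mem_iota => /andP [tr _] /=; rewrite ltnNge tr.
Qed.

Lemma blk_sumn_take t a : t < size ks -> a < nth 0 ks t ->
  blk ks (sumn (take t ks) + a) = t.
Proof.
move=> tks ata; rewrite /blk -[RHS](count_ltn_iota (ltnW tks)).
apply: eq_in_count => r; rewrite mem_iota add0n => /= rks.
case: (ltnP r t) => rt; first by rewrite (leq_trans (sumn_take_leq rt)) ?leq_addr.
have := sumn_take_leq (rt : t < r.+1); rewrite sumn_take_nth //; lia.
Qed.

Lemma sumn_take_decomp h : h < sumn ks ->
  exists t a, [/\ t < size ks, a < nth 0 ks t & h = sumn (take t ks) + a].
Proof.
elim: ks h => //= x ks' IH h hs.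
case: (ltnP h x) => hx; first by exists 0, h.
have [|t [a [tks ata e]]] := IH (h - x); first lia.
by exists t.+1, a; split => //=; lia.
Qed.

Lemma blk_lt h : h < sumn ks -> blk ks h < size ks.
Proof. by move/sumn_take_decomp => [t [a [tks ata ->]]]; rewrite blk_sumn_take. Qed.

Lemma blk_surj t : all (fun x => 0 < x) ks -> t < size ks -> exists2 h, h < sumn ks & blk ks h = t.
Proof.
move=> ks_pos tks; have kt_pos : 0 < nth 0 ks t by apply/(allP ks_pos)/mem_nth.
exists (sumn (take t ks)); last by rewrite -[sumn _]addn0 blk_sumn_take.
rewrite -[in X in _ < X](take_size ks); apply: leq_trans (sumn_take_leq tks).
by rewrite sumn_take_nth // -addn1 leq_add2l.
Qed.
End Blocks.

Definition perm_ninv m (s : 'S_m) : nat :=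
  \sum_(a < m) \sum_(b < m) ((a < b) && (s b < s a)).

Lemma ninv_perm m (s : 'S_m) (pi : nat -> nat) :
  (forall a : 'I_m, pi a = s a) -> ninv pi m = perm_ninv s.
Proof. by move=> piE; apply: eq_bigr => a _; apply: eq_bigr => b _; rewrite !piE. Qed.

Lemma ninv_id m : ninv id m = 0.
Proof. by apply: big1 => a _; apply: big1 => b _; case: ltngtP. Qed.

Lemma ltn_lift m (j : 'I_m.+1) (x y : 'I_m) : (lift j x < lift j y) = (x < y).
Proof. by rewrite /= !ltnNge leq_bump2. Qed.

Lemma sum_leq_ord m j : \sum_(x < m) (j <= x) = m - j.
Proof. by elim: m => [|m IH]; rewrite ?big_ord0 // big_ord_recr /= IH; case: leqP; lia. Qed.

Lemma perm_ninv_lift m (j : 'I_m.+1) (s : 'S_m) :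
  perm_ninv (lift_perm ord_max j s) = perm_ninv s + (m - j).
Proof.
have widenE (x : 'I_m) : widen_ord (leqnSn m) x = lift ord_max x.
  by apply: ord_inj; rewrite lift_max.
rewrite /perm_ninv big_ord_recr /= [X in _ + X]big1 ?addn0 => [|b _]; last first.
  by rewrite ltnNge -ltnS ltn_ord.
under eq_bigr => a _ do rewrite big_ord_recr /= widenE lift_perm_id lift_perm_lift ltn_ord.
rewrite big_split /= -sum_leq_ord [X in _ = _ + X](reindex_inj (@perm_inj _ s)) /=.
congr (_ + _); apply: eq_bigr => a _.
  apply: eq_bigr => b _; rewrite !widenE !lift_perm_lift.
  by rewrite -[bump _ _]/(nat_of_ord (lift j (s a))) ltn_lift.
by rewrite /= /bump; case: leqP => /=; lia.
Qed.

Lemma lift_perm_decomp m (s : 'S_m.+1) :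
  exists s' : 'S_m, s = lift_perm ord_max (s ord_max) s'.
Proof.
set j := s ord_max; pose f k := odflt k (unlift j (s (lift ord_max k))).
have fK k : lift j (f k) = s (lift ord_max k).
  rewrite /f; have := neq_lift ord_max k.
  by rewrite -(can_eq (permK s)) => /unlift_some [? ? ->].
have f_inj : injective f.
  by move=> a b fab; apply/(@lift_inj _ ord_max)/(@perm_inj _ s); rewrite -!fK fab.
exists (perm f_inj); apply/permP => k.
case: (unliftP ord_max k) => [k'|] ->; rewrite ?lift_perm_id //.
by rewrite lift_perm_lift permE fK.
Qed.

Lemma odd_perm_ninv m (s : 'S_m) : odd (perm_ninv s) = odd_perm s.
Proof.
elim: m s => [|m IH] s.
  by rewrite /perm_ninv big_ord0 (_ : s = 1%g) ?odd_perm1 //; apply/permP => -[].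
have [s' ->] := lift_perm_decomp s.
rewrite perm_ninv_lift oddD oddB ?IH ?odd_lift_perm /=; last by rewrite -ltnS.
by rewrite addbC addbA.
Qed.

Lemma ograph_wf_Gamma n ks (c : seq ('I_n * 'I_n)) :
  all (fun x => 0 < x) ks -> sumn ks = n ->
  uniq (chord_ends c) -> size (chord_ends c) = n -> ograph_wf (Gamma ks c).
Proof.
move=> ks_pos ks_sum c_uniq c_full; split => /=.
- by move=> h; apply: blk_lt; rewrite ks_sum.
- move=> a /(blk_surj ks_pos) [h]; rewrite ks_sum => hn <-.
  by exists (Ordinal hn).
- by move=> h; rewrite partnerK ?partner_neq.
- by move=> h; rewrite cd_src_partner //; case: (_ \in _).
Qed.

Lemma Geq_giso X Y phi pi : ograph_wf X -> ograph_wf Y -> giso X Y phi pi ->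
  Geq Y ((-1) ^+ gsign_exp X Y phi pi) X.
Proof. by move=> wfX wfY isoXY f f_lin; apply: f_lin. Qed.

Definition permuted_sizes (ks : seq nat) (s : 'S_(size ks)) : seq nat :=
  [seq nth 0 ks (s t) | t <- enum 'I_(size ks)].

Section PermutedSizes.
Variables (ks : seq nat) (s : 'S_(size ks)).

Lemma size_permuted_sizes : size (permuted_sizes s) = size ks.
Proof. by rewrite size_map size_enum_ord. Qed.

Lemma nth_permuted_sizes (t : 'I_(size ks)) : nth 0 (permuted_sizes s) t = nth 0 ks (s t).
Proof. by rewrite (nth_map t) ?size_enum_ord // nth_ord_enum. Qed.

Lemma perm_eq_permuted_sizes : perm_eq (permuted_sizes s) ks.
Proof.
rewrite -[X in perm_eq _ X](mkseq_nth 0) /mkseq -val_enum_ord -map_comp /permuted_sizes.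
rewrite (eq_map (_ : _ =1 (nth 0 ks \o val) \o s)) // map_comp; apply: perm_map.
apply: uniq_perm; rewrite ?(map_inj_uniq (@perm_inj _ s)) ?enum_uniq // => t.
by rewrite mem_enum -(permKV s t) map_f ?mem_enum.
Qed.
End PermutedSizes.

Section GammaIsomorphisms.
Variables (n : nat) (ks : seq nat) (c : seq ('I_n * 'I_n)).
Hypotheses (ks_pos : all (fun x => 0 < x) ks) (ks_sum : sumn ks = n).
Hypotheses (c_uniq : uniq (chord_ends c)) (c_full : size (chord_ends c) = n).

Lemma ograph_wf_Gamma_act ks' (g : 'S_n) :
  all (fun x => 0 < x) ks' -> sumn ks' = n -> ograph_wf (Gamma ks' (cd_act g c)).
Proof.
move=> ks'_pos ks'_sum.
by apply: ograph_wf_Gamma; rewrite ?uniq_chord_ends_act ?size_chord_ends_act.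
Qed.

Lemma Geq_Gamma_act ks' (g : 'S_n) (pi : nat -> nat) :
  all (fun x => 0 < x) ks' -> sumn ks' = n -> size ks = size ks' ->
  {in [pred a | a < size ks] &, injective pi} ->
  (forall a, a < size ks -> pi a < size ks') ->
  (forall h, blk ks' (g h) = pi (blk ks h)) ->
  Geq (Gamma ks' (cd_act g c)) ((-1) ^+ ninv pi (size ks)) (Gamma ks c).
Proof.
move=> ks'_pos ks'_sum size_ks' pi_inj pi_lt blk_g.
have wf := ograph_wf_Gamma ks_pos ks_sum c_uniq c_full.
have wf' := ograph_wf_Gamma_act g ks'_pos ks'_sum.
have iso : giso (Gamma ks c) (Gamma ks' (cd_act g c)) g pi.
  split=> //=; first by exists g^-1%g => h; rewrite ?permK ?permKV.
  by move=> h; rewrite partner_act.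
have := Geq_giso wf wf' iso; rewrite /gsign_exp /=.
suff -> : [set h in cd_src c | g h \notin cd_src (cd_act g c)] = set0 by rewrite cards0 addn0.
by apply/setP => h; rewrite in_set0 in_set cd_src_act andbN.
Qed.

Lemma Geq_Gamma_blk_preserving (g : 'S_n) :
  (forall h, blk ks (g h) = blk ks h) -> Geq (Gamma ks (cd_act g c)) 1 (Gamma ks c).
Proof.
move=> blk_g; have := @Geq_Gamma_act ks g id; rewrite ninv_id expr0.
by apply=> // a b.
Qed.

Lemma Geq_Gamma_tperm_chord p : p \in c ->
  Geq (Gamma ks (cd_act (tperm p.1 p.2) c)) (-1) (Gamma ks c).
Proof.
move=> pc; set t := tperm p.1 p.2.
have wf := ograph_wf_Gamma ks_pos ks_sum c_uniq c_full.
have wf' := ograph_wf_Gamma_act t ks_pos ks_sum.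
have iso : giso (Gamma ks c) (Gamma ks (cd_act t c)) id id.
  split=> //=; [by exists id | by split | by move=> h; rewrite partner_tperm_chord].
have := Geq_giso wf wf' iso; rewrite /gsign_exp /= ninv_id cd_src_tperm_chord //.
by rewrite cards1 expr1.
Qed.

Lemma Geq_Gamma_permute_blocks (s : 'S_(size ks)) (rho : 'S_n) :
  (forall (h : 'I_n) (t : 'I_(size ks)) a, a < nth 0 ks (s t) ->
     val h = sumn (take t (permuted_sizes s)) + a -> val (rho h) = sumn (take (s t) ks) + a) ->
  Geq (Gamma (permuted_sizes s) (cd_act rho^-1 c)) ((-1) ^+ odd_perm s) (Gamma ks c).
Proof.
move=> rho_blocks; set ks' := permuted_sizes s.
have perm_ks' : perm_eq ks' ks := perm_eq_permuted_sizes s.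
(* block t of ks' is block s t of ks *)
pose pi a := oapp (fun t : 'I_(size ks) => val (s^-1%g t)) a (insub a).
have piE (t : 'I_(size ks)) : pi t = s^-1%g t by rewrite /pi valK.
rewrite -odd_permV -odd_perm_ninv -(ninv_perm piE) signr_odd.
apply: Geq_Gamma_act; rewrite ?size_permuted_sizes //.
- by rewrite (perm_all _ perm_ks').
- by rewrite sumnE (perm_big _ perm_ks') -sumnE.
- move=> a b ha hb; rewrite -[a]/(val (Ordinal ha)) -[b]/(val (Ordinal hb)) !piE.
  by move=> /val_inj /perm_inj ->.
- by move=> a ha; rewrite -[a]/(val (Ordinal ha)) piE.
move=> h; have : rho^-1%g h < sumn ks'.
  by rewrite sumnE (perm_big _ perm_ks') -sumnE ks_sum.
case/sumn_take_decomp=> t0 [a []]; rewrite size_permuted_sizes => t0_lt.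
rewrite -[t0]/(val (Ordinal t0_lt)); set t := Ordinal t0_lt.
rewrite nth_permuted_sizes => a_lt hE; have := rho_blocks _ t a a_lt hE.
rewrite permKV => ->; rewrite hE !blk_sumn_take ?size_permuted_sizes ?nth_permuted_sizes //.
by rewrite piE permK.
Qed.
End GammaIsomorphisms.

Local Open Scope ring_scope.

Theorem lemma5p2 (k : nat) (ks : seq nat) (c : seq ('I_(2 * k) * 'I_(2 * k))) :
  all (fun x => 0 < x)%N ks -> sumn ks = (2 * k)%N -> chord_diagram k c ->
  (* (i) *)
  (forall p, p \in c ->
     Geq (Gamma ks (cd_act (tperm p.1 p.2) c)) (-1) (Gamma ks c))
  /\
  (* (ii) *)
  (forall s : 'S_(2 * k), (forall h : 'I_(2 * k), blk ks (s h) = blk ks h) ->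
     Geq (Gamma ks (cd_act s c)) 1 (Gamma ks c))
  /\
  (* (iii) *)
  (forall (s : 'S_(size ks)) (rho : 'S_(2 * k)),
     let ks' := [seq nth 0%N ks (s t) | t <- enum 'I_(size ks)] in
     (forall (h : 'I_(2 * k)) (t : 'I_(size ks)) (a : nat),
        (a < nth 0%N ks (s t))%N -> val h = (sumn (take t ks') + a)%N ->
        val (rho h) = (sumn (take (s t) ks) + a)%N) ->
     Geq (Gamma ks' (cd_act rho^-1 c)) ((-1) ^+ odd_perm s) (Gamma ks c)).
Proof.
move=> ks_pos ks_sum [c_size [c_uniq _]].
have c_full : size (chord_ends c) = (2 * k)%N by rewrite size_chord_ends c_size.
split; [|split].
- exact: Geq_Gamma_tperm_chord.
- exact: Geq_Gamma_blk_preserving.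
- exact: Geq_Gamma_permute_blocks.
Qed.
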